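(* For every $i \in \mathbb{N}$, the transposition $\sigma_{(i)}$ lies in the bi-immune symmetric group $G_{\mathfrak{B}}$.
   Context: $\mathbb{N}$ denotes the non-negative integers, and $\mathrm{Sym}(\mathbb{N})$ the group of all permutations of $\mathbb{N}$ under composition ($g \circ f$ means apply $f$ first). For $i \in \mathbb{N}$, $\sigma_{(i)}$ is the permutation swapping $i$ and $i+1$ and fixing all other numbers. For $A \subseteq \mathbb{N}$ with increasing enumeration $a_0 < a_1 < \cdots$, define $\sigma_A(x) = \lim_{n \to \infty} (\sigma_{(a_0)} \circ \sigma_{(a_1)} \circ \cdots \circ \sigma_{(a_n)})(x)$ (eventually constant for each $x$). A set $A$ is immune if it is infinite and contains no infinite computably enumerable subset; $A$ is bi-immune if both $A$ and $\mathbb{N} - A$ are immune. For bi-immune $A$, $\sigma_A$ is a permutation of $\mathbb{N}$. The bi-immune symmetric group $G_{\mathfrak{B}}$ is the subgroup of $\mathrm{Sym}(\mathbb{N})$ generated by $\{\sigma_A : A \text{ bi-immune}\}$. *)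

From Stdlib Require Import Arith List.
Import ListNotations.

(** * A model of computation: partial (mu-)recursive functions.
    Functions act on argument lists (missing arguments read as 0). *)
Inductive rec : Type :=
| RZero : rec
| RSucc : rec
| RProj : nat -> rec
| RComp : rec -> list rec -> rec
| RPrim : rec -> rec -> rec
| RMu   : rec -> rec.

Inductive eval : rec -> list nat -> nat -> Prop :=
| ev_zero xs : eval RZero xs 0
| ev_succ xs : eval RSucc xs (S (nth 0 xs 0))
| ev_proj i xs : eval (RProj i) xs (nth i xs 0)
| ev_comp f gs xs ys y :
    Forall2 (fun g v => eval g xs v) gs ys ->
    eval f ys y -> eval (RComp f gs) xs y
| ev_prim0 f g xs y : eval f xs y -> eval (RPrim f g) (0 :: xs) y
| ev_primS f g n xs r y :
    eval (RPrim f g) (n :: xs) r -> eval g (n :: r :: xs) y ->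
    eval (RPrim f g) (S n :: xs) y
| ev_mu f xs n :
    eval f (n :: xs) 0 ->
    (forall m, m < n -> exists v, v <> 0 /\ eval f (m :: xs) v) ->
    eval (RMu f) xs n.

Definition ce (W : nat -> Prop) : Prop :=
  exists f : rec, forall x, W x <-> exists y, eval f [x] y.

Definition infinite_set (A : nat -> Prop) : Prop :=
  forall n, exists m, n <= m /\ A m.

Definition immune (A : nat -> Prop) : Prop :=
  infinite_set A /\
  forall W, ce W -> (forall x, W x -> A x) -> ~ infinite_set W.

Definition bi_immune (A : nat -> Prop) : Prop :=
  immune A /\ immune (fun x => ~ A x).

Definition transp (i : nat) (x : nat) : nat :=
  if Nat.eqb x i then S i else if Nat.eqb x (S i) then i else x.

Definition increasing_enum (A : nat -> Prop) (a : nat -> nat) : Prop :=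
  (forall n, a n < a (S n)) /\ (forall x, A x <-> exists n, a n = x).

Fixpoint partial_comp (a : nat -> nat) (n : nat) (x : nat) : nat :=
  match n with
  | 0 => transp (a 0) x
  | S m => partial_comp a m (transp (a (S m)) x)
  end.

Definition is_sigma (A : nat -> Prop) (f : nat -> nat) : Prop :=
  exists a, increasing_enum A a /\
    forall x, exists N, forall n, N <= n -> partial_comp a n x = f x.

(** Subgroup of Sym(N) generated by a set S of permutations
    (composition: g o f means f first; equality of permutations is extensional). *)
Inductive generated (S : (nat -> nat) -> Prop) : (nat -> nat) -> Prop :=
| gen_id : generated S (fun x => x)
| gen_base f : S f -> generated S f
| gen_comp f g : generated S f -> generated S g ->
    generated S (fun x => g (f x))
| gen_inv f finv : generated S f ->
    (forall x, finv (f x) = x) -> (forall x, f (finv x) = x) ->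
    generated S finv
| gen_ext f g : generated S f -> (forall x, f x = g x) -> generated S g.

Definition in_G_B (f : nat -> nat) : Prop :=
  generated (fun g => exists A, bi_immune A /\ is_sigma A g) f.

From Stdlib Require Import Arith List Lia Classical ClassicalEpsilon Cantor.
Import ListNotations.

(** We build a set B = {b_0 < b_1 < ...} with
    i < b_0 and b_n + 2 <= b_(n+1) such that both B and A = {i} u B
    are bi-immune.  Because consecutive elements of B are at distance at
    least 2, the transpositions sigma_(b_n) have pairwise disjoint supports,
    so sigma_B is an involution; and since i < b_0, the enumeration of A is
    that of B with i put in front, whence sigma_A = sigma_(i) o sigma_B.
    Therefore sigma_(i) = sigma_A o sigma_B lies in G_B.

    The computability part is a diagonalisation: programs
    are coded injectively by natural numbers, so the c.e. sets form a sequence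
    W_0, W_1, ...; choosing, stage by stage, two fresh points of W_e (when W_e
    is infinite), putting the first one into B and keeping the second one out,
    makes every infinite c.e. set meet both B and its complement. *)

(** Facts about transpositions reduce to case analysis on the equality
    tests in [transp], innermost tests first. *)
Ltac transp_cases :=
  unfold transp;
  repeat match goal with
         | |- context [Nat.eqb ?a ?b] =>
             lazymatch a with context [Nat.eqb _ _] => fail | _ => idtac end;
             destruct (Nat.eqb_spec a b); cbv beta iota
         end; lia.

Lemma transp_below k x : x < k -> transp k x = x.
Proof. intro Hx; transp_cases. Qed.

Lemma transp_comm c d x : S d < c -> transp c (transp d x) = transp d (transp c x).
Proof. intro Hdc; transp_cases. Qed.

Lemma transp_invol k x : transp k (transp k x) = x.
Proof. transp_cases. Qed.

Lemma increasing_lt (a : nat -> nat) :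
  (forall n, a n < a (S n)) -> forall n m, n < m -> a n < a m.
Proof.
  intros Hinc n m Hnm; induction Hnm as [|m _ IH].
  - apply Hinc.
  - specialize (Hinc m); lia.
Qed.

Lemma increasing_ge_index (a : nat -> nat) :
  (forall n, a n < a (S n)) -> forall n, n <= a n.
Proof. intros Hinc n; induction n as [|n IH]; [lia|specialize (Hinc n); lia]. Qed.

Lemma between_not_term (a : nat -> nat) e y :
  (forall n, a n < a (S n)) -> a e < y < a (S e) -> forall n, a n <> y.
Proof.
  intros Hinc Hy n Hn; subst y.
  destruct (Nat.lt_trichotomy n e) as [Hlt|[Heq|Hgt]].
  - pose proof (increasing_lt a Hinc n e Hlt); lia.
  - subst; lia.
  - destruct (Nat.eq_dec n (S e)) as [->|Hne]; [lia|].
    pose proof (increasing_lt a Hinc (S e) n ltac:(lia)); lia.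
Qed.

(** The stable value of the partial compositions at x, i.e. sigma_A x. *)
Definition sigma_of (a : nat -> nat) (x : nat) : nat := partial_comp a x x.

Section PartialCompositions.
Variable a : nat -> nat.
Hypothesis a_increasing : forall n, a n < a (S n).

(** Transpositions sigma_(a_k) with a_k > x do not move x, so the partial
    compositions at x are constant from index x on. *)
Lemma partial_comp_stable x m : x <= m -> partial_comp a m x = sigma_of a x.
Proof.
  intro Hxm; induction Hxm as [|m Hxm IH]; [reflexivity|].
  simpl; rewrite transp_below; [exact IH|].
  pose proof (increasing_ge_index a a_increasing (S m)); lia.
Qed.

Lemma is_sigma_of_enum (A : nat -> Prop) :
  (forall x, A x <-> exists n, a n = x) -> is_sigma A (sigma_of a).
Proof.
  intro HA; exists a; split; [split; assumption|].
  intro x; exists x; intros n Hn; apply partial_comp_stable, Hn.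
Qed.

Lemma partial_comp_transp_comm n c x :
  S (a n) < c -> partial_comp a n (transp c x) = transp c (partial_comp a n x).
Proof.
  revert x; induction n as [|n IH]; intros x Hc; simpl.
  - symmetry; apply transp_comm, Hc.
  - rewrite <- (transp_comm c (a (S n))) by exact Hc.
    apply IH; specialize (a_increasing n); lia.
Qed.

Hypothesis a_sparse : forall n, a n + 2 <= a (S n).

(** With gaps of at least 2 the supports are pairwise disjoint, so every
    partial composition is an involution ... *)
Lemma partial_comp_invol n x : partial_comp a n (partial_comp a n x) = x.
Proof.
  revert x; induction n as [|n IH]; intro x; simpl; [apply transp_invol|].
  assert (Hdisj : S (a n) < a (S n)) by (specialize (a_sparse n); lia).
  rewrite <- (partial_comp_transp_comm n _ _ Hdisj), transp_invol; apply IH.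
Qed.

Lemma sigma_of_invol x : sigma_of a (sigma_of a x) = x.
Proof.
  set (m := Nat.max x (sigma_of a x)).
  rewrite <- (partial_comp_stable (sigma_of a x) m) by lia.
  rewrite <- (partial_comp_stable x m) by lia.
  apply partial_comp_invol.
Qed.
End PartialCompositions.

Definition cons_seq (i : nat) (a : nat -> nat) (n : nat) : nat :=
  match n with 0 => i | S k => a k end.

Lemma partial_comp_cons i a m x :
  partial_comp (cons_seq i a) (S m) x = transp i (partial_comp a m x).
Proof. revert x; induction m as [|m IH]; intro x; [reflexivity|apply IH]. Qed.

Lemma is_sigma_cons (A : nat -> Prop) i a :
  increasing_enum A (cons_seq i a) -> is_sigma A (fun x => transp i (sigma_of a x)).
Proof.
  intro Henum; exists (cons_seq i a); split; [exact Henum|].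
  assert (Hinc : forall n, a n < a (S n)) by (intro n; apply (proj1 Henum (S n))).
  intro x; exists (S x); intros [|m] Hm; [lia|].
  rewrite partial_comp_cons, (partial_comp_stable a Hinc x m) by lia; reflexivity.
Qed.

(** * Coding programs by natural numbers *)

(** Induction principle for [rec] that sees the programs inside [RComp]. *)
Fixpoint rec_nested_ind (P : rec -> Prop) (h0 : P RZero) (h1 : P RSucc)
  (h2 : forall i, P (RProj i))
  (h3 : forall f gs, P f -> Forall P gs -> P (RComp f gs))
  (h4 : forall f g, P f -> P g -> P (RPrim f g)) (h5 : forall f, P f -> P (RMu f))
  (r : rec) {struct r} : P r :=
  let IH := rec_nested_ind P h0 h1 h2 h3 h4 h5 in
  match r with
  | RZero => h0
  | RSucc => h1
  | RProj i => h2 i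
  | RComp f gs =>
      h3 f gs (IH f)
        ((fix all (l : list rec) : Forall P l :=
            match l with
            | [] => Forall_nil P
            | g :: l' => Forall_cons g (IH g) (all l')
            end) gs)
  | RPrim f g => h4 f g (IH f) (IH g)
  | RMu f => h5 f (IH f)
  end.

Fixpoint code_list (l : list nat) : nat :=
  match l with [] => 0 | n :: l' => S (to_nat (n, code_list l')) end.

Lemma code_list_inj l l' : code_list l = code_list l' -> l = l'.
Proof.
  revert l'; induction l as [|n l IH]; intros [|n' l'] E; cbn [code_list] in E;
    try discriminate; [reflexivity|].
  apply Nat.succ_inj, to_nat_inj in E; injection E as -> E.
  rewrite (IH _ E); reflexivity.
Qed.

Fixpoint code (r : rec) : nat :=
  match r with
  | RZero => to_nat (0, 0)
  | RSucc => to_nat (1, 0)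
  | RProj i => to_nat (2, i)
  | RComp f gs => to_nat (3, to_nat (code f, code_list (map code gs)))
  | RPrim f g => to_nat (4, to_nat (code f, code g))
  | RMu f => to_nat (5, code f)
  end.

Lemma map_inj_Forall {X Y : Type} (f : X -> Y) l :
  Forall (fun x => forall y, f x = f y -> x = y) l ->
  forall l', map f l = map f l' -> l = l'.
Proof.
  induction 1 as [|x l Hx _ IH]; intros [|y l'] E; simpl in E;
    try discriminate; [reflexivity|].
  injection E as Exy El; rewrite (Hx _ Exy), (IH _ El); reflexivity.
Qed.

Lemma code_inj r : forall s, code r = code s -> r = s.
Proof.
  induction r as [| |i|f gs IHf IHgs|f g IHf IHg|f IHf] using rec_nested_ind;
    intros [| |j|f' gs'|f' g'|f'] E; cbn [code] in E; apply to_nat_inj in E;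
    try discriminate; try reflexivity.
  all: apply (f_equal snd) in E; cbn [snd] in E.
  - rewrite E; reflexivity.
  - apply to_nat_inj in E; injection E as Ef Egs.
    apply code_list_inj in Egs.
    rewrite (IHf _ Ef), (map_inj_Forall code gs IHgs gs' Egs); reflexivity.
  - apply to_nat_inj in E; injection E as Ef Eg.
    rewrite (IHf _ Ef), (IHg _ Eg); reflexivity.
  - rewrite (IHf _ E); reflexivity.
Qed.

(** W_e: the domain of the program coded by e (empty if e codes nothing). *)
Definition W (e x : nat) : Prop := exists f, code f = e /\ exists y, eval f [x] y.

Lemma ce_is_some_W V : ce V -> exists e, forall x, V x <-> W e x.
Proof.
  intros [f Hf]; exists (code f); intro x; rewrite Hf; split.
  - intro Hdom; exists f; split; [reflexivity|exact Hdom].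
  - intros [f' [E Hdom]]; apply code_inj in E; subst; exact Hdom.
Qed.

Lemma bi_immune_of_splitting (C : nat -> Prop) :
  infinite_set C -> infinite_set (fun x => ~ C x) ->
  (forall e, infinite_set (W e) -> exists x y, W e x /\ C x /\ W e y /\ ~ C y) ->
  bi_immune C.
Proof.
  intros HC HnC Hsplit.
  assert (Hmeets : forall V, ce V -> infinite_set V ->
            exists x y, V x /\ C x /\ V y /\ ~ C y).
  { intros V HV Hinf; destruct (ce_is_some_W V HV) as [e He].
    assert (HWe : infinite_set (W e)).
    { intro n; destruct (Hinf n) as [m [Hm Vm]]; exists m; split; [exact Hm|apply He, Vm]. }
    destruct (Hsplit e HWe) as [x [y [Wx [Cx [Wy Cy]]]]].
    exists x, y; repeat split; try apply He; assumption. }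
  split; split; try assumption; intros V HV Hsub Hinf;
    destruct (Hmeets V HV Hinf) as [x [y [Vx [Cx [Vy Cy]]]]].
  - exact (Cy (Hsub y Vy)).
  - exact (Hsub x Vx Cx).
Qed.

(** * Diagonalisation against a sequence of sets *)

Section Diagonalisation.
Variable U : nat -> nat -> Prop.

Lemma fresh_pair e b : exists pq : nat * nat,
  b <= fst pq < snd pq /\ (infinite_set (U e) -> U e (fst pq) /\ U e (snd pq)).
Proof.
  destruct (classic (infinite_set (U e))) as [Hinf|Hfin].
  - destruct (Hinf b) as [p [Hp Up]]; destruct (Hinf (S p)) as [q [Hq Uq]].
    exists (p, q); simpl; split; [lia|auto].
  - exists (b, S b); simpl; split; [lia|contradiction].
Qed.

Definition fresh (e b : nat) : nat * nat :=
  proj1_sig (constructive_indefinite_description _ (fresh_pair e b)).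

Lemma fresh_spec e b : b <= fst (fresh e b) < snd (fresh e b) /\
  (infinite_set (U e) -> U e (fst (fresh e b)) /\ U e (snd (fresh e b))).
Proof. exact (proj2_sig (constructive_indefinite_description _ (fresh_pair e b))). Qed.

Variable s : nat.

(** Stage e starts above every point chosen at earlier stages. *)
Fixpoint stage_start (e : nat) : nat :=
  match e with 0 => s | S e' => S (snd (fresh e' (stage_start e'))) end.

Lemma diagonal_sequence : exists p q : nat -> nat,
  s <= p 0 /\ (forall e, p e < q e < p (S e)) /\
  (forall e, infinite_set (U e) -> U e (p e) /\ U e (q e)).
Proof.
  exists (fun e => fst (fresh e (stage_start e))), (fun e => snd (fresh e (stage_start e))).
  split; [|split].
  - apply (fresh_spec 0 s).
  - intro e; pose proof (fresh_spec e (stage_start e)).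
    pose proof (fresh_spec (S e) (stage_start (S e))); simpl in *; lia.
  - intro e; apply fresh_spec.
Qed.
End Diagonalisation.

Lemma sparse_bi_immune_sequence s : exists b : nat -> nat,
  s <= b 0 /\ (forall n, b n + 2 <= b (S n)) /\
  forall F : nat -> Prop, (forall x, F x -> x < s) ->
  bi_immune (fun x => F x \/ exists n, b n = x).
Proof.
  destruct (diagonal_sequence W s) as [p [q [Hp0 [Hpq Hmeet]]]].
  assert (Hinc : forall n, p n < p (S n)) by (intro n; specialize (Hpq n); lia).
  assert (Hq_out : forall e n, p n <> q e) by (intro e; apply (between_not_term p e _ Hinc), Hpq).
  assert (Hq_big : forall e, e <= q e /\ s <= q e).
  { intro e; pose proof (increasing_ge_index p Hinc e);
      pose proof (increasing_lt p Hinc 0 e); specialize (Hpq e).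
    destruct e; lia. }
  exists p; split; [exact Hp0|split; [intro n; specialize (Hpq n); lia|]].
  intros F HF.
  assert (Hnot : forall e, ~ (F (q e) \/ exists n, p n = q e)).
  { intros e [Fq|[n En]]; [specialize (HF _ Fq); specialize (Hq_big e); lia|exact (Hq_out e n En)]. }
  apply bi_immune_of_splitting.
  - intro n; exists (p n); split; [apply increasing_ge_index, Hinc|right; exists n; reflexivity].
  - intro n; exists (q n); split; [apply Hq_big|apply Hnot].
  - intros e He; destruct (Hmeet e He) as [Wp Wq].
    exists (p e), (q e); repeat split; try assumption; [right; exists e; reflexivity|apply Hnot].
Qed.

Theorem mainTheorem4 : forall i : nat, in_G_B (transp i).
Proof.
  intro i.
  destruct (sparse_bi_immune_sequence (S i)) as [b [Hb0 [Hsparse Hbi]]].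
  assert (Hinc : forall n, b n < b (S n)) by (intro n; specialize (Hsparse n); lia).
  (* sigma_(i) = sigma_A o sigma_B with B = range b and A = {i} u B. *)
  apply (gen_ext _ (fun x => transp i (sigma_of b (sigma_of b x)))).
  - apply (gen_comp _ (sigma_of b) (fun x => transp i (sigma_of b x))); apply gen_base.
    + exists (fun x => False \/ exists n, b n = x); split.
      * apply Hbi; contradiction.
      * apply (is_sigma_of_enum b Hinc); tauto.
    + exists (fun x => x = i \/ exists n, b n = x); split.
      * apply Hbi; intros x ->; lia.
      * apply is_sigma_cons; split.
        -- intros [|n]; simpl; [lia|apply Hinc].
        -- intro x; split.
           ++ intros [->|[n <-]]; [exists 0|exists (S n)]; reflexivity.
           ++ intros [[|n] <-]; [left|right; exists n]; reflexivity.
  - intro x; rewrite (sigma_of_invol b Hinc Hsparse); reflexivity.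
Qed.
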